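(* Let $R$ be an arbitrary unital associative ring and let $J=J_2\circ J_1$ act on $M_3(R)$. Then for every $M\in{\rm dom}(J^3)$ there exist invertible diagonal $3\times 3$ matrices $D_1,D_2$ over $R$ such that $J^3(M)=D_1^{-1}MD_2$.
   Context: $R^*$ denotes the group of units of $R$. $M_n^*(R)$ is the set of invertible $n\times n$ matrices over $R$ (usual product), and $M_n^\star(R)$ is the set of $n\times n$ matrices all of whose entries lie in $R^*$. $J_1(M)=M^{-1}$ with domain $M_n^*(R)$; $J_2(M)$ is the matrix with $(j,k)$-entry $(M_{kj})^{-1}$, with domain $M_n^\star(R)$. For maps $f,g$ the composition $g\circ f$ has domain $\{x\in{\rm dom}(f): f(x)\in{\rm dom}(g)\}$; $J^k$ is the $k$-fold composition of $J$ with this natural domain. *)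

From mathcomp Require Import all_boot all_order all_algebra.
Set Implicit Arguments. Unset Strict Implicit. Unset Printing Implicit Defensive.
Import GRing.Theory.
Local Open Scope ring_scope.

Section Defs.
Variable R : unitRingType.

Definition is_inv3 (M N : 'M[R]_3) : Prop := M *m N = 1%:M /\ N *m M = 1%:M.

Definition dom_J1 (M : 'M[R]_3) : Prop := exists N, is_inv3 M N.

Definition dom_J2 (M : 'M[R]_3) : Prop := forall i j, M i j \is a GRing.unit.

Definition J2 (M : 'M[R]_3) : 'M[R]_3 := \matrix_(j, k) (M k j)^-1.

(* Graph of the partial map J = J_2 o J_1 : J M M' means M \in dom(J) and
   J(M) = M'.  (J_1(M) = M^{-1} is the unique two-sided inverse.) *)
Definition Jgraph (M M' : 'M[R]_3) : Prop :=
  exists N, is_inv3 M N /\ dom_J2 N /\ M' = J2 N.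
End Defs.

From mathcomp Require Import all_boot all_order all_algebra.
Set Implicit Arguments.
Unset Strict Implicit.
Unset Printing Implicit Defensive.
Import GRing.Theory.
Local Open Scope ring_scope.

(* Put Y := J(M), X := Y^-1 and K := (J_2 X)^-1, so that J^3(M) = J_2 K and
   J_2 Y = M^-1.  For each index k, the rows a := X_(k+1), b := X_(k+2), the
   row c := K_k and the column e := Y_(.,k) satisfy a e = b e = 0 and
   c a^-1 = c b^-1 = 0 (entrywise inverses), and these relations make
   c_m (b_m^-1 b_n - a_m^-1 a_n) e_n alternating in (m, n).  Taking for d_k its
   value at (0, 1), each off-diagonal entry of J_2(K) diag(d) J_2(Y) becomes,
   up to a common sign, the sum over k of f(k+2) - f(k+1) with
   f r = X_ri^-1 X_rj, which telescopes.  So J^3(M) diag(d) M^-1 is diagonal.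
   The d_k are units because a 2x2 Schur complement of X is inverted by one of
   Y, and the diagonal factor is invertible because the same construction in
   the opposite ring gives a diagonal matrix on the other side of M. *)

Lemma sum_ord3_uniq (V : nmodType) (F : 'I_3 -> V) (m n l : 'I_3) :
  uniq [:: m; n; l] -> \sum_k F k = F m + F n + F l.
Proof.
move=> mnl; have [_ eq_mnl] :=
  uniq_min_size mnl (fun x _ => mem_enum _ x) (eq_leq (size_enum_ord 3)).
rewrite -big_enum (perm_big _ (uniq_perm (enum_uniq _) mnl (fun x => esym (eq_mnl x)))).
by rewrite !big_cons big_nil /= addr0 addrA.
Qed.

Lemma ord3P (i : 'I_3) : [\/ i = 0, i = 1 | i = 2].
Proof.
by case: i => [[|[|[|//]]] ?]; [apply: Or31 | apply: Or32 | apply: Or33]; apply: val_inj.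
Qed.

Lemma sum_ord_shift (V : nmodType) n (F : 'I_n.+1 -> V) (t : 'I_n.+1) :
  \sum_k F (k + t) = \sum_k F k.
Proof. by rewrite [RHS](reindex_inj (addIr t)). Qed.

Lemma mulmx_entry3 (R : pzSemiRingType) (A B : 'M[R]_3) (m n l i j : 'I_3) :
  uniq [:: m; n; l] -> (A *m B) i j = A i m * B m j + A i n * B n j + A i l * B l j.
Proof. by move=> mnl; rewrite mxE (sum_ord3_uniq _ mnl). Qed.

Lemma mulmx1_entry3 (R : pzSemiRingType) (A B : 'M[R]_3) (m n l i j : 'I_3) :
  uniq [:: m; n; l] -> A *m B = 1%:M ->
  A i m * B m j + A i n * B n j + A i l * B l j = (i == j)%:R.
Proof. by move=> mnl AB; rewrite -(mulmx_entry3 _ _ _ _ mnl) AB mxE. Qed.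

Lemma mulmx1_offdiag (R : pzSemiRingType) n (A B : 'M[R]_n) i j :
  A *m B = 1%:M -> i != j -> \sum_x A i x * B x j = 0.
Proof.
move=> AB ij; transitivity ((A *m B) i j); first by rewrite mxE.
by rewrite AB mxE (negPf ij).
Qed.

Lemma unitr_of_two_sided (R : unitRingType) (l x r : R) :
  l * x \is a GRing.unit -> x * r \is a GRing.unit -> l \is a GRing.unit.
Proof.
move=> ulx uxr; set y := (l * x)^-1 * l; set z := r * (x * r)^-1.
have yx : y * x = 1 by rewrite -mulrA mulVr.
have xz : x * z = 1 by rewrite mulrA mulrV.
have yz : y = z by rewrite -[y]mulr1 -xz mulrA yx mul1r.
have ux : x \is a GRing.unit by apply/unitrP; exists z; rewrite -{1}yz.
by rewrite -(unitrMl _ ux).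
Qed.

Lemma diag_mx_unit_of_sandwich (R : unitRingType) n (r r' : 'rV[R]_n) (M : 'M[R]_n) k :
  (diag_mx r *m M) k k \is a GRing.unit -> (M *m diag_mx r') k k \is a GRing.unit ->
  r 0 k \is a GRing.unit.
Proof. by rewrite mul_diag_mx mul_mx_diag !mxE; exact: unitr_of_two_sided. Qed.

Lemma is_inv3_diag (R : unitRingType) (d : 'rV[R]_3) : (forall k, d 0 k \is a GRing.unit) ->
  is_inv3 (diag_mx (\row_k (d 0 k)^-1)) (diag_mx d).
Proof.
move=> ud; rewrite /is_inv3 !mulmx_diag -diag_const_mx.
by split; congr diag_mx; apply/rowP => k; rewrite !mxE ?mulVr ?mulrV.
Qed.

Lemma J2K (R : unitRingType) (A : 'M[R]_3) : dom_J2 A -> J2 (J2 A) = A.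
Proof. by move=> uA; apply/matrixP => i j; rewrite !mxE invrK. Qed.

Lemma dom_J2_J2 (R : unitRingType) (A : 'M[R]_3) : dom_J2 A -> dom_J2 (J2 A).
Proof. by move=> uA i j; rewrite mxE unitrV. Qed.

Lemma J2_trmx (R : unitRingType) (A : 'M[R]_3) :
  J2 (A^T : 'M[R^c]_3) = (J2 A)^T :> 'M[R^c]_3.
Proof. by apply/matrixP => i j; rewrite !mxE. Qed.

Section Alternating.
Variables (R : unitRingType) (a b c e : 'I_3 -> R).
Hypotheses (unit_a : forall x, a x \is a GRing.unit)
           (unit_b : forall x, b x \is a GRing.unit).
Hypotheses (ae0 : \sum_x a x * e x = 0) (be0 : \sum_x b x * e x = 0).
Hypotheses (ca0 : \sum_x c x * (a x)^-1 = 0) (cb0 : \sum_x c x * (b x)^-1 = 0).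

Definition scaled_minor (m n : 'I_3) : R :=
  c m * ((b m)^-1 * b n - (a m)^-1 * a n) * e n.

Lemma scaled_minor_swap_fst m n l :
  uniq [:: m; n; l] -> scaled_minor l n = - scaled_minor m n.
Proof.
move=> mnl; have lmn : uniq [:: l; m; n] by rewrite -(rot_uniq 1).
move: ca0 cb0; rewrite !(sum_ord3_uniq _ lmn).
move=> /eqP; rewrite addr_eq0 => /eqP ca; move=> /eqP; rewrite addr_eq0 => /eqP cb.
apply/eqP; rewrite -subr_eq0 opprK; apply/eqP.
rewrite /scaled_minor !mulrBr !mulrBl addrACA -opprD !mulrA -!mulrDl ca cb.
by rewrite !mulNr !divrK ?subrr.
Qed.

Lemma scaled_minor_swap_snd m n l :
  uniq [:: m; n; l] -> scaled_minor m l = - scaled_minor m n.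
Proof.
move=> mnl; have lnm : uniq [:: l; n; m] by rewrite -rev_uniq.
move: ae0 be0; rewrite !(sum_ord3_uniq _ lnm).
move=> /eqP; rewrite addr_eq0 => /eqP ae; move=> /eqP; rewrite addr_eq0 => /eqP be.
apply/eqP; rewrite -subr_eq0 opprK; apply/eqP.
rewrite /scaled_minor !mulrBr !mulrBl addrACA -opprD -!mulrA -!mulrDr ae be.
by rewrite !mulrN !mulKr ?subrr.
Qed.

Lemma scaled_minor_alternating i j :
  i != j -> scaled_minor i j = (-1) ^+ (j != i + 1) * scaled_minor 0 1.
Proof.
have u012 : uniq [:: 0; 1; 2 : 'I_3] by [].
have u021 : uniq [:: 0; 2; 1 : 'I_3] by [].
have u120 : uniq [:: 1; 2; 0 : 'I_3] by [].
have u210 : uniq [:: 2; 1; 0 : 'I_3] by [].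
have sm12 : scaled_minor 1 2 = scaled_minor 0 1.
  by rewrite (scaled_minor_swap_fst u021) (scaled_minor_swap_snd u012) opprK.
have sm21 : scaled_minor 2 1 = - scaled_minor 0 1 by rewrite (scaled_minor_swap_fst u012).
case: (ord3P i) => ->; case: (ord3P j) => -> //= _;
  rewrite ?expr0 ?expr1 ?mul1r ?mulN1r // ?sm12 ?sm21 //.
- by rewrite (scaled_minor_swap_snd u012).
- by rewrite (scaled_minor_swap_snd u120) sm12.
- by rewrite (scaled_minor_swap_snd u210) sm21 opprK.
Qed.

Hypotheses (unit_c : forall x, c x \is a GRing.unit)
           (unit_e : forall x, e x \is a GRing.unit).

Lemma scaled_minor_unscale m n :
  (c m)^-1 * scaled_minor m n * (e n)^-1 = (b m)^-1 * b n - (a m)^-1 * a n.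
Proof. by rewrite /scaled_minor !mulrA mulrK // mulVr // mul1r. Qed.

Lemma scaled_minor_unit m n :
  b n - b m * (a m)^-1 * a n \is a GRing.unit -> scaled_minor m n \is a GRing.unit.
Proof.
move=> uS; rewrite /scaled_minor unitrMl // unitrMr //.
have -> : (b m)^-1 * b n - (a m)^-1 * a n = (b m)^-1 * (b n - b m * (a m)^-1 * a n).
  by rewrite mulrBr !mulrA mulVr // mul1r.
by rewrite unitrMr ?unitrV.
Qed.

End Alternating.

Section Schur.
Variable R : unitRingType.

Lemma elim_row (t x0 x1 w y0 y1 z u v : R) : w \is a GRing.unit ->
  (y0 - z * w^-1 * x0) * u + (y1 - z * w^-1 * x1) * v
    = y0 * u + y1 * v + z * t - z * w^-1 * (x0 * u + x1 * v + w * t).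
Proof.
move=> uw; rewrite [in RHS]mulrDr [z / w * (w * t)]mulrA mulrVK //.
by rewrite opprD addrACA subrr addr0 !mulrBl addrACA -opprD mulrDr !mulrA.
Qed.

Lemma elim_col (t x0 x1 w y0 y1 z u v : R) : w \is a GRing.unit ->
  u * (y0 - x0 * w^-1 * z) + v * (y1 - x1 * w^-1 * z)
    = u * y0 + v * y1 + t * z - (u * x0 + v * x1 + t * w) * w^-1 * z.
Proof.
move=> uw; rewrite [in RHS]mulrDl mulrK // mulrDl.
by rewrite opprD addrACA subrr addr0 !mulrBr addrACA -opprD !mulrDl !mulrA.
Qed.

Lemma schur_left_inverse (p q u0 u1 v0 v1 : R) : u0 \is a GRing.unit ->
  p * u0 + q * v0 = 0 -> p * u1 + q * v1 = 1 -> q * (v1 - v0 * u0^-1 * u1) = 1.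
Proof.
move=> uu0 /eqP; rewrite addr_eq0 => /eqP pu0 <-.
have -> : p = - (q * v0) * u0^-1 by rewrite -pu0 mulrK.
by rewrite mulrBr addrC !mulNr !mulrA.
Qed.

Lemma schur_right_inverse (p q u0 u1 v0 v1 : R) : u0 \is a GRing.unit ->
  u0 * p + u1 * q = 0 -> v0 * p + v1 * q = 1 -> (v1 - v0 * u0^-1 * u1) * q = 1.
Proof.
move=> uu0 /eqP; rewrite addr_eq0 => /eqP u0p <-.
have -> : p = u0^-1 * - (u1 * q) by rewrite -u0p mulKr.
by rewrite mulrBl addrC !mulrN !mulrA.
Qed.

End Schur.

Lemma schur_complement_unit (R : unitRingType) (X Y : 'M[R]_3) (r s k m n l : 'I_3) :
  X *m Y = 1%:M -> Y *m X = 1%:M -> uniq [:: r; s; k] -> uniq [:: m; n; l] ->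
  X r m \is a GRing.unit -> Y l k \is a GRing.unit ->
  X s n - X s m * (X r m)^-1 * X r n \is a GRing.unit.
Proof.
move=> XY YX rsk mnl uXrm uYlk.
have [mn ml nl] : [/\ m != n, m != l & n != l].
  by move: mnl; rewrite /= !inE negb_or => /and3P[/andP[]].
have [rs rk sk] : [/\ r != s, r != k & s != k].
  by move: rsk; rewrite /= !inE negb_or => /and3P[/andP[]].
apply/unitrP; exists (Y n s - Y n k * (Y l k)^-1 * Y l s); split.
- apply: (@schur_left_inverse _ (Y n r - Y n k * (Y l k)^-1 * Y l r)) => //.
  + rewrite (elim_row (X k m)) // !(mulmx1_entry3 _ _ rsk YX).
    by rewrite !(eq_sym _ m) (negPf mn) (negPf ml) mulr0 subr0.
  + rewrite (elim_row (X k n)) // !(mulmx1_entry3 _ _ rsk YX).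
    by rewrite eqxx (eq_sym l) (negPf nl) mulr0 subr0.
- apply: (@schur_right_inverse _ (Y m s - Y m k * (Y l k)^-1 * Y l s)) => //.
  + rewrite (elim_col (X r l)) // !(mulmx1_entry3 _ _ mnl XY).
    by rewrite (negPf rs) (negPf rk) !mul0r subr0.
  + rewrite (elim_col (X s l)) // !(mulmx1_entry3 _ _ mnl XY).
    by rewrite eqxx (negPf sk) !mul0r subr0.
Qed.

Section DiagonalScaling.
Variables (R : unitRingType) (X Y K : 'M[R]_3).
Hypotheses (XY : X *m Y = 1%:M) (YX : Y *m X = 1%:M) (KJX : K *m J2 X = 1%:M).
Hypotheses (unit_X : dom_J2 X) (unit_Y : dom_J2 Y) (unit_K : dom_J2 K).

Definition local_minor (k : 'I_3) : 'I_3 -> 'I_3 -> R :=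
  scaled_minor (X (k + 1)) (X (k + 2)) (K k) (fun x => Y x k).

Definition scaling : 'rV[R]_3 := \row_k local_minor k 0 1.

Lemma ord3_shift_neq (k : 'I_3) : (k + 1 != k) && (k + 2 != k).
Proof. by case: (ord3P k) => ->. Qed.

Lemma mulmx_J2_offdiag i j : i != j -> \sum_x K i x * (X j x)^-1 = 0.
Proof.
move=> ij; rewrite -[RHS](mulmx1_offdiag KJX ij).
by apply: eq_bigr => x _; rewrite mxE.
Qed.

Lemma local_minor_alternating k i j :
  i != j -> local_minor k i j = (-1) ^+ (j != i + 1) * local_minor k 0 1.
Proof.
have /andP[k1 k2] := ord3_shift_neq k.
apply: scaled_minor_alternating => //.
- exact: mulmx1_offdiag XY _.
- exact: mulmx1_offdiag XY _.
- by apply: mulmx_J2_offdiag; rewrite eq_sym.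
- by apply: mulmx_J2_offdiag; rewrite eq_sym.
Qed.

Lemma scaling_unit k : scaling 0 k \is a GRing.unit.
Proof.
rewrite mxE; apply: scaled_minor_unit => //.
apply: (schur_complement_unit (k := k) (l := 2) XY YX) => //.
by case: (ord3P k) => ->.
Qed.

Lemma J2_scaling_J2_is_diag : is_diag_mx (J2 K *m diag_mx scaling *m J2 Y).
Proof.
apply/is_diag_mxP => i j; rewrite val_eqE => ij.
pose f r := (X r i)^-1 * X r j.
rewrite mxE (eq_bigr (fun k => (-1) ^+ (j != i + 1) * (f (k + 2) - f (k + 1)))).
  by rewrite -mulr_sumr sumrB !(sum_ord_shift f) subrr mulr0.
move=> k _; rewrite mul_mx_diag !mxE.
have unscale : (K k i)^-1 * local_minor k i j * (Y j k)^-1 = f (k + 2) - f (k + 1).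
  exact: (scaled_minor_unscale _ _ (unit_K k) (fun x => unit_Y x k)).
rewrite -[local_minor k 0 1](signrMK (j != i + 1)) -local_minor_alternating //.
rewrite (mulrA _ ((-1) ^+ _)) (commr_sign (K k i)^-1).
by rewrite -(mulrA ((-1) ^+ _)) -(mulrA ((-1) ^+ _)) unscale.
Qed.

End DiagonalScaling.

Lemma J2_diag_J2 (R : unitRingType) (X Y K : 'M[R]_3) :
  X *m Y = 1%:M -> Y *m X = 1%:M -> K *m J2 X = 1%:M ->
  dom_J2 X -> dom_J2 Y -> dom_J2 K ->
  exists2 d : 'rV[R]_3, (forall k, d 0 k \is a GRing.unit)
                      & is_diag_mx (J2 K *m diag_mx d *m J2 Y).
Proof.
move=> XY YX KJX uX uY uK; exists (scaling X Y K) => [k|].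
  exact: scaling_unit.
exact: J2_scaling_J2_is_diag.
Qed.

(* Transposition turns this into J2_diag_J2 over the converse ring. *)
Lemma J2_diag_J2_rev (R : unitRingType) (X Y K : 'M[R]_3) :
  X *m Y = 1%:M -> Y *m X = 1%:M -> J2 X *m K = 1%:M ->
  dom_J2 X -> dom_J2 Y -> dom_J2 K ->
  exists2 d : 'rV[R]_3, (forall k, d 0 k \is a GRing.unit)
                      & is_diag_mx (J2 Y *m diag_mx d *m J2 K).
Proof.
move=> XY YX JXK uX uY uK.
case: (@J2_diag_J2 R^c X^T Y^T K^T) => [||||||d ud dd].
- by rewrite -trmx_mul_rev YX trmx1.
- by rewrite -trmx_mul_rev XY trmx1.
- by rewrite J2_trmx -trmx_mul_rev JXK trmx1.
- by move=> i j; rewrite mxE.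
- by move=> i j; rewrite mxE.
- by move=> i j; rewrite mxE.
exists d => //; rewrite -is_diag_trmx trmx_mul_rev (trmx_mul_rev (J2 Y)).
by rewrite tr_diag_mx -!J2_trmx mulmxA.
Qed.

Theorem theorem1 (R : unitRingType) (M M1 M2 M3 : 'M[R]_3) :
  Jgraph M M1 -> Jgraph M1 M2 -> Jgraph M2 M3 ->
  exists D1 D1inv D2 D2inv : 'M[R]_3,
    [/\ is_diag_mx D1, is_diag_mx D2, is_inv3 D1 D1inv, is_inv3 D2 D2inv
      & M3 = D1inv *m M *m D2].
Proof.
move=> [N1 [[MN1 N1M] [uN1 ->]]] [N2 [[M1N2 N2M1] [uN2 ->]]] [N3 [[M2N3 N3M2] [uN3 ->]]].
have uM1 := dom_J2_J2 uN1.
have [d ud /diag_mxP[r Rdiag]] := J2_diag_J2 N2M1 M1N2 N3M2 uN2 uM1 uN3.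
have [d' ud' /diag_mxP[r' Rdiag']] := J2_diag_J2_rev N2M1 M1N2 M2N3 uN2 uM1 uN3.
rewrite J2K // in Rdiag Rdiag'.
have rM : diag_mx r *m M = J2 N3 *m diag_mx d by rewrite -Rdiag -mulmxA N1M mulmx1.
have Mr' : M *m diag_mx r' = diag_mx d' *m J2 N3 by rewrite -Rdiag' !mulmxA MN1 mul1mx.
have ur k : r 0 k \is a GRing.unit.
  apply: (diag_mx_unit_of_sandwich (r' := r') (M := M));
    by rewrite ?rM ?Mr' ?mul_mx_diag ?mul_diag_mx !mxE unitrMl ?unitrV.
exists (diag_mx (\row_k (r 0 k)^-1)), (diag_mx r), (diag_mx (\row_k (d 0 k)^-1)), (diag_mx d).
split; [by [] | by [] | exact: is_inv3_diag | exact: is_inv3_diag |].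
by rewrite rM -mulmxA (is_inv3_diag ud).2 mulmx1.
Qed.
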